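(* Let $p,m$ be integers with $m\ge1$ and $0\le p\le[\frac m2]$, and let $c_j=c_j(p,m)$. Then $\frac{2c_1}{m-1}+\frac{c_2}{2}+c_3>0$ in each of the following cases: ($p=0$, $m\ge2$); ($p=1$, $m\ge3$); ($p\ge2$, $m\ge17$); ($p<\frac m2$, $5\le m\le16$).
   Context: With $\binom ab=0$ for $b<0$: $c_1=\frac1{180}\binom mp-\frac1{12}\binom{m-2}{p-1}+\frac12\binom{m-4}{p-2}$, $c_2=-\frac1{180}\binom mp+\frac12\binom{m-2}{p-1}-2\binom{m-4}{p-2}$, $c_3=\frac1{72}\binom mp-\frac16\binom{m-2}{p-1}+\frac12\binom{m-4}{p-2}$. *)

From HB Require Import structures.
From mathcomp Require Import all_boot all_order all_algebra.
Set Implicit Arguments. Unset Strict Implicit. Unset Printing Implicit Defensive.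
Import Order.TTheory GRing.Theory Num.Theory.
Local Open Scope ring_scope.

(* Binomial coefficient binom a b for integers a, b with the paper's convention
   binom a b = 0 for b < 0.  For b >= 0 we use the generalized binomial
   a(a-1)...(a-b+1)/b!, which agrees with 'C(a,b) when a >= 0. *)
Definition binomZ (a b : int) : rat :=
  match b with
  | Posz k => (\prod_(i < k) ((a - i%:Z)%:~R : rat)) / (k`!)%:R
  | Negz _ => 0
  end.

Definition c1 (p m : nat) : rat :=
  1/180 * binomZ m p - 1/12 * binomZ (m%:Z - 2) (p%:Z - 1)
  + 1/2 * binomZ (m%:Z - 4) (p%:Z - 2).
Definition c2 (p m : nat) : rat :=
  - (1/180) * binomZ m p + 1/2 * binomZ (m%:Z - 2) (p%:Z - 1)
  - 2 * binomZ (m%:Z - 4) (p%:Z - 2).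
Definition c3 (p m : nat) : rat :=
  1/72 * binomZ m p - 1/6 * binomZ (m%:Z - 2) (p%:Z - 1)
  + 1/2 * binomZ (m%:Z - 4) (p%:Z - 2).

From HB Require Import structures.
From mathcomp Require Import all_boot all_order all_algebra.
From mathcomp Require Import zify ring lra.
Import Order.TTheory GRing.Theory Num.Theory.
Local Open Scope ring_scope.

(* Absorption expresses binom (m-2) (p-1) and binom (m-4) (p-2) through
   binom m p, which turns the quantity into binom m p / (180 m (m-1)^2 (m-2))
   times Phi m t, a concave quadratic in t = p (m - p).  For 2 <= p <= m/2 we
   have 2 (m - 2) <= t <= m^2/4, and Phi is positive at both ends once m >= 17:
   its value at t = m^2/4 is m^2 (m-2) (m-16) / 8.  For 5 <= m <= 16 the
   finitely many cases are computed, and p = 0, 1 are direct. *)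

Definition ffactZ (a : int) (k : nat) : rat := \prod_(i < k) (a - i%:Z)%:~R.

Lemma ffactZS (a : int) (k : nat) : ffactZ a k.+1 = a%:~R * ffactZ (a - 1) k.
Proof.
rewrite /ffactZ big_ord_recl subr0; congr (_ * _).
apply: eq_bigr => i _; rewrite /= /bump /= PoszD opprD addrA; reflexivity.
Qed.

Lemma ffactZSr (a : int) (k : nat) : ffactZ a k.+1 = ffactZ a k * (a - k%:Z)%:~R.
Proof. by rewrite /ffactZ big_ord_recr. Qed.

Lemma ffactZ_gt0 (a : int) (k : nat) : k%:Z <= a -> 0 < ffactZ a k.
Proof.
move=> le_ka; apply: prodr_gt0 => i _.
by rewrite ltr0z subr_gt0 (lt_le_trans _ le_ka) // ltz_nat.
Qed.

Lemma binomZE (a : int) (k : nat) : binomZ a k = ffactZ a k / k`!%:R.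
Proof. by []. Qed.

Lemma binomZ_neg (a b : int) : b < 0 -> binomZ a b = 0.
Proof. by case: b. Qed.

Lemma binomZ0 (a : int) : binomZ a 0 = 1.
Proof. by rewrite binomZE /ffactZ big_ord0 divr1. Qed.

Lemma binomZ_gt0 (a : int) (k : nat) : k%:Z <= a -> 0 < binomZ a k.
Proof.
move=> le_ka; rewrite binomZE.
by apply: divr_gt0; [exact: ffactZ_gt0 | rewrite ltr0n fact_gt0].
Qed.

Lemma mul_binomZ_diag (a : int) (k : nat) :
  k.+1%:R * binomZ a k.+1 = a%:~R * binomZ (a - 1) k.
Proof.
rewrite !binomZE ffactZS factS natrM; field.
by rewrite nat1r !pnatr_eq0 -lt0n fact_gt0.
Qed.

Lemma mul_binomZ_down (a : int) (k : nat) :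
  (a - k%:Z)%:~R * binomZ a k = a%:~R * binomZ (a - 1) k.
Proof. by rewrite !binomZE mulrA [_%:~R * _]mulrC -ffactZSr ffactZS mulrA. Qed.

Lemma binomZ1 (a : int) : binomZ a 1 = a%:~R.
Proof. by have := mul_binomZ_diag a 0; rewrite mul1r binomZ0 mulr1. Qed.

Lemma mul_binomZ_down2 (a : int) (k : nat) :
  (k.+1%:Z * (a - k.+1%:Z))%:~R * binomZ a k.+1
  = (a * (a - 1))%:~R * binomZ (a - 2) k.
Proof.
have -> : a - k.+1%:Z = a - 1 - k%:Z by lia.
rewrite !intrM mulrAC mul_binomZ_diag mulrAC -!mulrA mul_binomZ_down.
by have -> : a - 1 - 1 = a - 2 by lia.
Qed.

Definition cform (p m : nat) : rat :=
  2 * c1 p m / (m%:R - 1) + c2 p m / 2 + c3 p m.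

Lemma cformE (p m : nat) : m != 1%N ->
  cform p m =
  (m%:R / 90 * binomZ m p + (m%:R - 3) / 12 * binomZ (m%:Z - 2) (p%:Z - 1)
   - (m%:R - 3) / 2 * binomZ (m%:Z - 4) (p%:Z - 2)) / (m%:R - 1).
Proof.
move=> m_neq1; rewrite /cform /c1 /c2 /c3; field.
by rewrite subr_eq0 pnatr_eq1.
Qed.

Lemma cform0_gt0 (m : nat) : (2 <= m)%N -> 0 < cform 0 m.
Proof.
move=> m_ge2; rewrite cformE; last by lia.
rewrite binomZ0 !binomZ_neg //.
have : 2 <= (m%:R : rat) by rewrite (ler_nat rat 2 m).
move: (m%:R : rat) => M M_ge2.
apply: divr_gt0; lra.
Qed.

Lemma cform1_gt0 (m : nat) : (3 <= m)%N -> 0 < cform 1 m.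
Proof.
move=> m_ge3; rewrite cformE; last by lia.
rewrite binomZ1 -pmulrn subrr binomZ0 binomZ_neg //.
have : 3 <= (m%:R : rat) by rewrite (ler_nat rat 3 m).
move: (m%:R : rat) => M M_ge3.
apply: divr_gt0; nra.
Qed.

Definition Phi (m t : rat) : rat :=
  2 * m ^+ 2 * (m - 1) * (m - 2) + 15 * (m - 2) * (m - 3) * t - 90 * t * (t - m + 1).

Lemma cform_numerator_Phi {M P B0 B1 B2 : rat} :
  P * (M - P) * B0 = M * (M - 1) * B1 ->
  (P - 1) * (M - P - 1) * B1 = (M - 2) * (M - 3) * B2 ->
  180 * M * (M - 1) * (M - 2) * (M / 90 * B0 + (M - 3) / 12 * B1 - (M - 3) / 2 * B2)
  = B0 * Phi M (P * (M - P)).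
Proof.
move=> down0 down1; apply/eqP; rewrite -subr_eq0; apply/eqP.
transitivity ((15 * (M - 2) * (M - 3) - 90 * (P * (M - P) - M + 1))
                * (M * (M - 1) * B1 - P * (M - P) * B0)
              - 90 * M * (M - 1) * ((M - 2) * (M - 3) * B2 - (P - 1) * (M - P - 1) * B1)).
  by rewrite /Phi; field.
by rewrite down0 down1 !subrr !mulr0 subrr.
Qed.

Lemma cform_gt0_of_Phi (p m : nat) : (2 <= p)%N -> (p + 2 <= m)%N ->
  0 < Phi m%:R (p%:R * (m%:R - p%:R)) -> 0 < cform p m.
Proof.
move=> p_ge2 m_ge Phi_gt0; rewrite cformE; last by lia.
have M_ge4 : 4 <= (m%:R : rat) by rewrite (ler_nat rat 4); lia.
have M1_gt0 : 0 < (m%:R : rat) - 1 by lra.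
have D_gt0 : 0 < 180 * (m%:R : rat) * (m%:R - 1) * (m%:R - 2).
  by apply: mulr_gt0; [apply: mulr_gt0; [apply: mulr_gt0|]|]; lra.
have B0_gt0 : 0 < binomZ m p by apply: binomZ_gt0; lia.
have := mul_binomZ_down2 m p.-1; rewrite prednK; last by lia.
have -> : p.-1%:Z = p%:Z - 1 by lia.
have := mul_binomZ_down2 (m%:Z - 2) p.-2.
have -> : p.-2.+1%:Z = p%:Z - 1 by lia.
have -> : p.-2%:Z = p%:Z - 2 by lia.
have -> : m%:Z - 2 - 2 = m%:Z - 4 by lia.
have -> : m%:Z - 2 - (p%:Z - 1) = m%:Z - p%:Z - 1 by lia.
have -> : m%:Z - 2 - 1 = m%:Z - 3 by lia.
rewrite !(intrM, intrB, rmorph_nat) -!pmulrn => down1 down0.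
have := mulr_gt0 B0_gt0 Phi_gt0.
rewrite -(cform_numerator_Phi down0 down1) (pmulr_rgt0 _ D_gt0) => numerator_gt0.
exact: divr_gt0 numerator_gt0 M1_gt0.
Qed.

Lemma quadratic_gt0_between (R : realFieldType) (a b c x0 x1 x : R) :
  0 <= c -> x0 <= x <= x1 ->
  0 < a + b * x0 - c * x0 ^+ 2 -> 0 < a + b * x1 - c * x1 ^+ 2 ->
  0 < a + b * x - c * x ^+ 2.
Proof.
move=> c_ge0 /andP[]; rewrite le_eqVlt => /predU1P[<- //|lt_x0x] le_xx1.
move=> f0_gt0 f1_gt0.
have lt01 := lt_le_trans lt_x0x le_xx1.
have interp : (x1 - x0) * (a + b * x - c * x ^+ 2)
    = (x1 - x) * (a + b * x0 - c * x0 ^+ 2) + (x - x0) * (a + b * x1 - c * x1 ^+ 2)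
      + c * ((x1 - x0) * (x - x0) * (x1 - x)).
  by ring.
have : 0 < (x1 - x0) * (a + b * x - c * x ^+ 2).
  have : 0 <= (x1 - x) * (a + b * x0 - c * x0 ^+ 2).
    by apply: mulr_ge0; [rewrite subr_ge0 | exact: ltW].
  have : 0 < (x - x0) * (a + b * x1 - c * x1 ^+ 2).
    by apply: mulr_gt0; rewrite // subr_gt0.
  have : 0 <= c * ((x1 - x0) * (x - x0) * (x1 - x)).
    by apply: mulr_ge0 => //; apply: mulr_ge0; [apply: mulr_ge0|]; rewrite subr_ge0 // ltW.
  rewrite interp; lra.
by rewrite pmulr_rgt0 // subr_gt0 lt01.
Qed.

Lemma Phi_gt0_large (p m : nat) : (2 <= p)%N -> (p.*2 <= m)%N -> (17 <= m)%N ->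
  0 < Phi m%:R (p%:R * (m%:R - p%:R)).
Proof.
move=> p_ge2 le_2p_m m_ge17.
have : 2 <= (p%:R : rat) by rewrite (ler_nat rat 2).
have : 2 * p%:R <= (m%:R : rat) by rewrite -natrM ler_nat mul2n.
have : 17 <= (m%:R : rat) by rewrite (ler_nat rat 17).
move: (m%:R : rat) (p%:R : rat) => s P s_ge17 le_2P_s P_ge2.
have -> : Phi s (P * (s - P)) = 2 * s ^+ 2 * (s - 1) * (s - 2)
    + (15 * (s - 2) * (s - 3) + 90 * (s - 1)) * (P * (s - P)) - 90 * (P * (s - P)) ^+ 2.
  by rewrite /Phi; ring.
apply: (@quadratic_gt0_between _ _ _ _ (2 * (s - 2)) (s ^+ 2 / 4)) => //.
- by apply/andP; split; nra.
- rewrite [X in 0 < X](_ : _ = (s - 2) * (2 * s ^+ 2 * (s - 1) + 30 * (s - 3) * (s - 8))).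
    by apply: mulr_gt0; nra.
  by ring.
- rewrite [X in 0 < X](_ : _ = s ^+ 2 * (s - 2) * (s - 16) / 8); last by field.
  by apply: divr_gt0; nra.
Qed.

Lemma Phi_gt0_small (p m : nat) : (5 <= m <= 16)%N -> (p.*2 < m)%N ->
  0 < Phi m%:R (p%:R * (m%:R - p%:R)).
Proof.
move=> /andP[m_ge5 m_le16] lt_2p_m.
have table : all (fun m => all (fun p => 0 < Phi m%:R (p%:R * (m%:R - p%:R)))
                                (iota 0 (uphalf m))) (iota 5 12).
  by vm_compute.
move/allP/(_ m): table; rewrite mem_iota => /(_ ltac:(lia)) /allP /(_ p).
by rewrite mem_iota; apply; lia.
Qed.

Theorem lemma5p4 (p m : nat) :
  (1 <= m)%N -> (p <= m./2)%N ->
  [\/ (p = 0%N /\ (2 <= m)%N),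
      (p = 1%N /\ (3 <= m)%N),
      ((2 <= p)%N /\ (17 <= m)%N)
    | ((p.*2 < m)%N /\ (5 <= m <= 16)%N)] ->
  0 < 2 * c1 p m / (m%:R - 1) + c2 p m / 2 + c3 p m.
Proof.
rewrite -/(cform p m).
move=> _ le_p_half [[-> m_ge2]|[-> m_ge3]|[p_ge2 m_ge17]|[lt_2p_m m_range]].
- exact: cform0_gt0.
- exact: cform1_gt0.
- apply: cform_gt0_of_Phi => //; first lia.
  by apply: Phi_gt0_large => //; lia.
- case: p le_p_half lt_2p_m => [|[|p]] _ lt_2p_m.
  + by apply: cform0_gt0; lia.
  + by apply: cform1_gt0; lia.
  + apply: cform_gt0_of_Phi => //; first lia.
    exact: Phi_gt0_small.
Qed.
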